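(* Let $K$ be a finitely separable ring. (1) Every element $a\in K$ is algebraic, i.e. $g(a)=0$ for some nonzero $g\in\mathbb{Z}[x]$ with $g(0)=0$. (2) For any two commuting elements $a,b\in K$ and any prime $p$ there exists a polynomial $f(x,y)\in\mathbb{Z}[x,y]$ (in commuting variables) with zero constant term, not all of whose coefficients are divisible by $p$, such that $f(a,b)=0$.
   Context: Rings are associative and not necessarily unital. A ring $K$ is finitely separable if for every $a\in K$ and every subring $A\subseteq K$ with $a\notin A$ there exist a finite ring $F$ and a homomorphism $\varphi:K\to F$ with $\varphi(a)\notin\varphi(A)$. *)

From HB Require Import structures.
From mathcomp Require Import all_boot all_order all_algebra.
Set Implicit Arguments. Unset Strict Implicit. Unset Printing Implicit Defensive.
Import Order.TTheory GRing.Theory Num.Theory.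
Local Open Scope ring_scope.

Record rng_axioms (K : zmodType) (mul : K -> K -> K) : Prop := RngAxioms {
  rng_mulA : forall x y z, mul x (mul y z) = mul (mul x y) z;
  rng_mulDl : forall x y z, mul (x + y) z = mul x z + mul y z;
  rng_mulDr : forall x y z, mul x (y + z) = mul x y + mul x z }.

Definition is_subrng (K : zmodType) (mul : K -> K -> K) (A : K -> Prop) : Prop :=
  A 0 /\ (forall x y, A x -> A y -> A (x - y)) /\
  (forall x y, A x -> A y -> A (mul x y)).

Definition is_rng_hom (K F : zmodType) (mulK : K -> K -> K) (mulF : F -> F -> F)
  (phi : K -> F) : Prop :=
  (forall x y, phi (x + y) = phi x + phi y) /\
  (forall x y, phi (mulK x y) = mulF (phi x) (phi y)).

Definition finitely_separable (K : zmodType) (mul : K -> K -> K) : Prop :=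
  forall (a : K) (A : K -> Prop), is_subrng mul A -> ~ A a ->
    exists (F : finZmodType) (mulF : F -> F -> F),
      rng_axioms mulF /\
      exists phi : K -> F, is_rng_hom mul mulF phi /\
        ~ (exists x, A x /\ phi x = phi a).

(* Positive powers in a non-unital ring: rpow x n = x^n for n >= 1,
   and rpow x 0 = 0 (only ever multiplied by a zero constant coefficient). *)
Definition rpow (K : zmodType) (mul : K -> K -> K) (x : K) (n : nat) : K :=
  match n with 0 => 0 | n'.+1 => iter n' (mul x) x end.

Definition peval (K : zmodType) (mul : K -> K -> K) (g : {poly int}) (a : K) : K :=
  \sum_(i < size g) (rpow mul a i) *~ g`_i.

Definition mono (K : zmodType) (mul : K -> K -> K) (a b : K) (i j : nat) : K :=
  if i == 0%N then rpow mul b j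
  else if j == 0%N then rpow mul a i
  else mul (rpow mul a i) (rpow mul b j).

(* f in Z[x,y] is represented as f : {poly {poly int}}, with f`_i`_j the
   coefficient of x^i y^j; evaluation for f with zero constant term. *)
Definition peval2 (K : zmodType) (mul : K -> K -> K) (f : {poly {poly int}}) (a b : K) : K :=
  \sum_(i < size f) \sum_(j < size f`_i) (mono mul a b i j) *~ f`_i`_j.

(* Polynomials with zero constant term are evaluated in the unitization Z x K,
   where evaluation is a ring morphism, and each statement comes from separating
   a well-chosen subring of evaluations by a finite quotient phi : K -> F.

   (1) Let A = {g(a) | g(0) = 0, g(1/2) in Z}.  Writing #|F| = 2^e m with m odd,
   s = x - #|F| x^(e+1) satisfies s(1/2) = (1 - m)/2 in Z and phi(s(a)) = phi(a),
   so no finite quotient separates a from A.  Hence a = g(a) for such a g, and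
   x - g is nonzero since g(1/2) is an integer.

   (2) Let A = {f(a,b) | f(0,0) = 0, f(t, t^-2) in F_p[t]}, inside F_p(t).  By
   pigeonhole phi((ab)^m) = phi((ab)^n) for odd m < n, and then
   s = y + (xy)^m x^n y - (xy)^n x^n y has phi(s(a,b)) = phi(b) and
   s(t, t^-2) = t^(n-m-2).  Hence b = f(a,b) for such an f, and y - f vanishes at
   (a,b); if p divided all its coefficients, t^-2 would be a polynomial. *)

From HB Require Import structures.
From mathcomp Require Import all_boot all_order all_algebra fingroup cyclic fraction.
From mathcomp Require Import ring zify.
From Stdlib Require Import Classical.
Import GRing.Theory.
Set Implicit Arguments.
Unset Strict Implicit.
Unset Printing Implicit Defensive.
Local Open Scope ring_scope.

Lemma add_zmod_morphism (U V : zmodType) (f : U -> V) :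
  {morph f : x y / x + y} -> zmod_morphism f.
Proof. by move=> fD x y; apply/eqP; rewrite eq_sym subr_eq -fD subrK. Qed.

Lemma add_mulrz (U V : zmodType) (f : U -> V) (fD : {morph f : x y / x + y}) x n :
  f (x *~ n) = f x *~ n.
Proof.
pose g : {additive U -> V} :=
  HB.pack f (GRing.isZmodMorphism.Build U V f (add_zmod_morphism fD)).
exact: raddfMz g n x.
Qed.

Section Rng.
Variables (K : zmodType) (mul : K -> K -> K).
Hypothesis mulK : rng_axioms mul.

Lemma rng_mulrzl x y n : mul (x *~ n) y = mul x y *~ n.
Proof. by apply: (add_mulrz (f := mul^~ y)) => u v; case: mulK. Qed.

Lemma rng_mulrzr x y n : mul x (y *~ n) = mul x y *~ n.
Proof. by apply: (add_mulrz (f := mul x)) => u v; case: mulK. Qed.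

Lemma rng_mul0l y : mul 0 y = 0.
Proof. by rewrite -(mulr0z 0) rng_mulrzl. Qed.

Lemma rng_mul0r x : mul x 0 = 0.
Proof. by rewrite -(mulr0z 0) rng_mulrzr. Qed.

(* The Dorroh extension Z x K.  Its dependence on the proof of the axioms lets
   the ring structure below be canonical. *)
Definition unitization of rng_axioms mul : Type := (int * K)%type.

Definition unitization_mul (x y : int * K) : int * K :=
  (x.1 * y.1, x.2 *~ y.1 + y.2 *~ x.1 + mul x.2 y.2).

Lemma unitization_mulA : associative unitization_mul.
Proof.
move=> [n x] [m y] [l z]; rewrite /unitization_mul /=; congr pair; first exact: mulrA.
case: (mulK) => mulA mulDl mulDr.
rewrite !mulDl !mulDr !rng_mulrzl !rng_mulrzr mulA !mulrzDl -!mulrzA.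
rewrite [l * n]mulrC [m * n]mulrC.
set a := x *~ _; set b := y *~ _; set c := z *~ _; set d := mul y z *~ n.
set e := mul x y *~ l; set f := mul x z *~ m.
rewrite !addrA; congr (_ + _).
by rewrite (addrAC (a + b + c) d e) (addrAC (a + b) c e) (addrAC (a + b + e + c) d f).
Qed.

Lemma unitization_mul1l : left_id (1, 0) unitization_mul.
Proof.
by move=> [m y]; rewrite /unitization_mul /= mul1r mul0rz add0r mulr1z rng_mul0l addr0.
Qed.

Lemma unitization_mul1r : right_id (1, 0) unitization_mul.
Proof.
by move=> [m y]; rewrite /unitization_mul /= mulr1 mul0rz addr0 mulr1z rng_mul0r addr0.
Qed.

Lemma unitization_mulDl : left_distributive unitization_mul +%R.
Proof.
move=> [n x] [m y] [l z]; rewrite /unitization_mul /=; congr pair; first exact: mulrDl.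
case: (mulK) => _ mulDl _; rewrite mulDl mulrzDl mulrzDr /=.
set a := x *~ l; set b := y *~ l; set c := z *~ n; set d := z *~ m.
rewrite !addrA; congr (_ + _).
by rewrite (addrAC a b c) (addrAC (a + c + b) d) (addrAC (a + c) b).
Qed.

Lemma unitization_mulDr : right_distributive unitization_mul +%R.
Proof.
move=> [n x] [m y] [l z]; rewrite /unitization_mul /=; congr pair; first exact: mulrDr.
case: (mulK) => _ _ mulDr; rewrite mulDr mulrzDl mulrzDr /=.
set a := x *~ m; set b := x *~ l; set c := y *~ n; set d := z *~ n.
rewrite !addrA; congr (_ + _).
by rewrite (addrAC a b c) (addrAC (a + c + b) d) (addrAC (a + c) b).
Qed.

End Rng.

HB.instance Definition _ (K : zmodType) (mul : K -> K -> K) (mulK : rng_axioms mul) :=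
  GRing.Zmodule.on (unitization mulK).

HB.instance Definition _ (K : zmodType) (mul : K -> K -> K) (mulK : rng_axioms mul) :=
  GRing.Zmodule_isNzRing.Build (unitization mulK) (unitization_mulA mulK)
    (unitization_mul1l mulK) (unitization_mul1r mulK)
    (unitization_mulDl mulK) (unitization_mulDr mulK) isT.

Lemma pair_sum (U V : zmodType) (I : Type) (r : seq I) (P : pred I) (F : I -> U * V) :
  \sum_(i <- r | P i) F i = (\sum_(i <- r | P i) (F i).1, \sum_(i <- r | P i) (F i).2).
Proof. by elim/big_rec3: _ => //= i x y z _ ->; case: (F i). Qed.

Section IntPolyEval.
Variable R : nzRingType.

Definition zeval (v : R) : {poly int} -> R := horner_morph (commr_int v).

Lemma zevalE v g : zeval v g = \sum_(i < size g) (g`_i)%:~R * v ^+ i.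
Proof.
rewrite /zeval /horner_morph (horner_coef_wide _ (size_poly _ _)).
by apply: eq_bigr => i _; rewrite coef_map.
Qed.

Lemma zevalX v : zeval v 'X = v.
Proof. exact: horner_morphX. Qed.

Lemma zevalC v c : zeval v c%:P = c%:~R.
Proof. exact: horner_morphC. Qed.

Lemma zeval0 g : zeval 0 g = (g`_0)%:~R.
Proof. by rewrite /zeval /horner_morph horner_coef0 coef_map. Qed.

Lemma zeval_comm u v : GRing.comm u v -> commr_rmorph (zeval v) u.
Proof.
move=> cuv g; rewrite zevalE; apply: commr_sum => i _.
by apply: commrM; [apply: commr_int | apply: commrX].
Qed.

Definition zeval2 u v (cuv : GRing.comm u v) : {poly {poly int}} -> R :=
  horner_morph (zeval_comm cuv).

Lemma zeval2E u v (cuv : GRing.comm u v) f :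
  zeval2 cuv f = \sum_(i < size f) (\sum_(j < size f`_i) (f`_i`_j)%:~R * v ^+ j) * u ^+ i.
Proof.
rewrite /zeval2 /horner_morph (horner_coef_wide _ (size_poly _ _)).
by apply: eq_bigr => i _; rewrite coef_map; congr (_ * _); exact: zevalE.
Qed.

Lemma zeval2X u v (cuv : GRing.comm u v) : zeval2 cuv 'X = u.
Proof. exact: horner_morphX. Qed.

Lemma zeval2Y u v (cuv : GRing.comm u v) : zeval2 cuv 'Y = v.
Proof. by rewrite /zeval2 horner_morphC; apply: zevalX. Qed.

Lemma zeval2_00 f : zeval2 (commr0 0) f = (f`_0`_0)%:~R.
Proof. by rewrite /zeval2 /horner_morph horner_coef0 coef_map; apply: zeval0. Qed.

End IntPolyEval.

HB.instance Definition _ (R : nzRingType) (v : R) := GRing.RMorphism.on (zeval v).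
HB.instance Definition _ (R : nzRingType) (u v : R) (cuv : GRing.comm u v) :=
  GRing.RMorphism.on (zeval2 cuv).

Lemma subrng_preim (R S : pzRingType) (f : {rmorphism R -> S}) (P : S -> Prop) :
  is_subrng *%R P -> is_subrng *%R (fun r => P (f r)).
Proof.
case=> P0 [PB PM]; split; [|split] => [|x y Px Py|x y Px Py].
- by rewrite rmorph0.
- by rewrite rmorphB; apply: PB.
- by rewrite rmorphM; apply: PM.
Qed.

Lemma subrng_range (R S : pzRingType) (f : {rmorphism R -> S}) :
  is_subrng *%R (fun s => exists r, f r = s).
Proof.
split; [|split] => [|_ _ [x <-] [y <-]|_ _ [x <-] [y <-]].
- by exists 0; rewrite rmorph0.
- by exists (x - y); rewrite rmorphB.
- by exists (x * y); rewrite rmorphM.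
Qed.

Lemma subrng_int (R : archiNumDomainType) : is_subrng *%R (fun x : R => x \is a Num.int).
Proof. by split; [|split] => [|x y|x y]; [exact: rpred0 | exact: rpredB | exact: rpredM]. Qed.

Section Unitization.
Variables (K : zmodType) (mul : K -> K -> K).
Hypothesis mulK : rng_axioms mul.
Local Notation U := (unitization mulK).

Lemma unitizationM (x y : U) :
  x * y = (x.1 * y.1, x.2 *~ y.1 + y.2 *~ x.1 + mul x.2 y.2).
Proof. by []. Qed.

Lemma unitization_intr (c : int) : (c%:~R : U) = (c, 0).
Proof.
have natrE n : (n%:R : U) = (n%:Z, 0).
  elim: n => [//|n IHn]; rewrite -natr1 IHn /=.
  by congr pair; rewrite ?addr0 // -addn1 PoszD.
case: c => n; rewrite ?NegzE ?mulrNz -pmulrn natrE //.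
by congr pair; exact: oppr0.
Qed.

Lemma unitization_intrM (c e : int) (x : K) : (c%:~R : U) * (e, x) = (c * e, x *~ c).
Proof. by rewrite unitization_intr unitizationM /= mul0rz add0r (rng_mul0l mulK) addr0. Qed.

Lemma embedM (x y : K) : ((0, x) : U) * (0, y) = (0, mul x y).
Proof. by rewrite unitizationM /= mulr0 !mulr0z !add0r. Qed.

Lemma embedX (x : K) n : ((0, x) : U) ^+ n = (0 ^+ n, rpow mul x n).
Proof.
elim: n => [//|n IHn]; rewrite exprS IHn unitizationM /= mulr0z addr0 -exprS.
case: n {IHn} => [|n] /=; first by rewrite mulr1z (rng_mul0r mulK) addr0.
by rewrite expr0n mulr0z add0r; congr pair.
Qed.

Lemma embedX_gt0 (x : K) n : (0 < n)%N -> ((0, x) : U) ^+ n = (0, rpow mul x n).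
Proof. by case: n => // n _; rewrite embedX expr0n. Qed.

Lemma zeval_embed (a : K) g : zeval ((0, a) : U) g = (g`_0, peval mul g a).
Proof.
rewrite zevalE; under eq_bigr do rewrite embedX unitization_intrM.
rewrite pair_sum; congr pair.
by rewrite -[RHS]intz -zeval0 zevalE; apply: eq_bigr => i _; rewrite intz.
Qed.

Lemma embed_comm (a b : K) : mul a b = mul b a -> GRing.comm ((0, a) : U) (0, b).
Proof. by move=> cab; rewrite /GRing.comm !embedM cab. Qed.

Lemma zeval2_embed (a b : K) (cab : mul a b = mul b a) f :
  zeval2 (embed_comm cab) f = (f`_0`_0, peval2 mul f a b).
Proof.
have embed_mono i j : ((0, a) : U) ^+ i * ((0, b) : U) ^+ j = (0 ^+ i * 0 ^+ j, mono mul a b i j).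
  rewrite /mono; case: i => [|i]; first by rewrite !expr0 !mul1r embedX.
  case: j => [|j]; first by rewrite !expr0 !mulr1 embedX.
  by rewrite !embedX !expr0n mulr0; apply: embedM.
have term i j : (f`_i`_j)%:~R * ((0, b) : U) ^+ j * ((0, a) : U) ^+ i =
    (f`_i`_j * (0 ^+ i * 0 ^+ j), mono mul a b i j *~ f`_i`_j).
  have cuv := embed_comm cab.
  by rewrite -mulrA (commrX i (commr_sym (commrX j cuv))) embed_mono unitization_intrM.
rewrite zeval2E; under eq_bigr do rewrite mulr_suml.
under eq_bigr do under eq_bigr do rewrite term.
under eq_bigr do rewrite pair_sum.
rewrite pair_sum; congr pair.
rewrite -[RHS]intz -zeval2_00 zeval2E.
apply: eq_bigr => i _; rewrite mulr_suml; apply: eq_bigr => j _.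
by rewrite /= intz [0 ^+ i * _]mulrC mulrA.
Qed.

Lemma subrng_embed_image (R : pzRingType) (ev : {rmorphism R -> U}) (P : R -> Prop) :
  is_subrng *%R P -> is_subrng mul (fun x => exists2 r, P r & ev r = (0, x)).
Proof.
case=> P0 [PB PM]; split; [|split] => [|x y [r Pr rx] [s Ps sy]|x y [r Pr rx] [s Ps sy]].
- by exists 0; rewrite ?rmorph0.
- exists (r - s); first exact: PB.
  by rewrite rmorphB rx sy; congr pair; exact: subr0.
- by exists (r * s); [apply: PM | rewrite rmorphM rx sy embedM].
Qed.

End Unitization.

Lemma mulrn_card (F : finZmodType) (x : F) : x *+ #|F| = 0.
Proof. by rewrite -FinRing.zmodXgE -cardsT; apply: expg_cardG; exact: in_setT. Qed.

Lemma nat_fun_collision (T : finType) (f : nat -> T) : exists i j, (i < j)%N /\ f i = f j.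
Proof.
have /injectivePn[i [j neq_ij fij]] : ~~ injectiveb (fun i : 'I_#|T|.+1 => f i).
  by apply/injectiveP => /leq_card; rewrite card_ord ltnn.
by case: (ltngtP i j) neq_ij => [lt_ij|lt_ji|/val_inj->]; rewrite ?eqxx //;
  [exists i, j | exists j, i].
Qed.

Lemma finitely_separable_mem (K : zmodType) (mul : K -> K -> K) (A : K -> Prop) a :
  finitely_separable mul -> is_subrng mul A ->
  (forall (F : finZmodType) (mulF : F -> F -> F) (phi : K -> F),
     rng_axioms mulF -> is_rng_hom mul mulF phi -> exists2 x, A x & phi x = phi a) ->
  A a.
Proof.
move=> sepK subA hit; apply: NNPP => notAa.
have [F [mulF [mulFA [phi [hom_phi]]]]] := sepK a A subA notAa.
by have [x Ax phix] := hit F mulF phi mulFA hom_phi; apply; exists x.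
Qed.

Lemma zeval2_pchar_dvd (R : nzRingType) (p : nat) (u v : R) (cuv : GRing.comm u v)
    (f : {poly {poly int}}) :
  p \in [pchar R] -> (forall i j, (p%:Z %| f`_i`_j)%Z) -> zeval2 cuv f = 0.
Proof.
move=> pR dvd_f; rewrite zeval2E big1 // => i _; rewrite big1 ?mul0r // => j _.
by have := dvd_f i j; rewrite (dvdz_pcharf pR) => /eqP ->; rewrite mul0r.
Qed.

Lemma tofracX_invX2_neq (R : idomainType) (q : {poly R}) :
  (tofrac ('X : {poly R}))^-2 != tofrac q.
Proof.
apply/eqP => eq_q; have : tofrac (q * 'X ^+ 2) = 1.
  by rewrite tofracM -eq_q tofracXn mulVf // expf_neq0 // tofrac_eq0 polyX_eq0.
move/eqP; rewrite -tofrac1 tofrac_eq => /eqP /(congr1 (horner^~ 0)).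
by rewrite hornerM hornerXn expr0n mulr0 hornerC => /eqP; rewrite eq_sym oner_eq0.
Qed.

Lemma expr_invX2_telescope (F : fieldType) (t : F) m k : t != 0 ->
  t^-2 + (t * t^-2) ^+ m * t ^+ (m + k.+2) * t^-2
       - (t * t^-2) ^+ (m + k.+2) * t ^+ (m + k.+2) * t^-2 = t ^+ k.
Proof.
move=> t0; have t_invt2 : t * t^-2 = t^-1 by rewrite expr2 invfM mulrA mulfV // mul1r.
have invtXK n : t^-1 ^+ n * t ^+ n = 1 by rewrite exprVn mulVf // expf_neq0.
rewrite t_invt2 invtXK mul1r exprD mulrA invtXK mul1r addrAC subrr add0r.
by rewrite -addn2 exprD -mulrA mulfV ?mulr1 // expf_neq0.
Qed.

Lemma finitely_separable_algebraic (K : zmodType) (mul : K -> K -> K) :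
  rng_axioms mul -> finitely_separable mul ->
  forall a : K, exists g : {poly int}, g != 0 /\ g`_0 = 0 /\ peval mul g a = 0.
Proof.
move=> mulK sepK a; pose u : unitization mulK := (0, a).
pose P g := zeval (2^-1 : rat) g \is a Num.int.
pose A x := exists2 g, P g & zeval u g = (0, x).
have subA : is_subrng mul A.
  exact: subrng_embed_image (subrng_preim (zeval (2^-1)) (@subrng_int rat)).
have [g Pg ga] : A a.
  apply: finitely_separable_mem sepK subA _ => F mulF phi _ [phiD _].
  have N_gt0 : (0 < #|F|)%N by apply/card_gt0P; exists 0.
  set N := #|F|; set e := logn 2 N; set m := (N`_2^')%N.
  have N_eq : N = (2 ^ e * m)%N by rewrite -p_part partnC.
  have m_odd : odd m by rewrite odd_2'nat part_pnat.
  pose s : {poly int} := 'X - (N%:Z)%:P * 'X ^+ e.+1.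
  exists (a - rpow mul a e.+1 *~ N).
    exists s.
    - rewrite /P /s rmorphB rmorphM rmorphXn /= zevalX zevalC N_eq.
      rewrite -(odd_double_half m) m_odd -pmulrn natrM natrX natrD -muln2 natrM mulr1n.
      rewrite [X in X \is a _](_ : _ = - (m./2)%:R) ?rpredN ?rpred_nat //.
      rewrite exprS exprVn; have : (2 ^+ e : rat) != 0 by rewrite expf_neq0.
      by move: (2 ^+ e) => t t0; field.
    - rewrite /s rmorphB rmorphM rmorphXn /= zevalX zevalC embedX unitization_intrM.
      by rewrite expr0n mulr0; congr pair; exact: subr0.
  by rewrite (add_zmod_morphism phiD) (add_mulrz phiD) -pmulrn mulrn_card subr0.
have := zeval_embed mulK a ('X - g); rewrite rmorphB /= zevalX ga subrr => -[h0 hval].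
exists ('X - g); split; last by split.
by apply: contraTneq Pg => /eqP; rewrite subr_eq0 => /eqP <-; rewrite /P zevalX.
Qed.

Lemma finitely_separable_pchar_relation (K : zmodType) (mul : K -> K -> K) :
  rng_axioms mul -> finitely_separable mul ->
  forall (a b : K) (p : nat), mul a b = mul b a -> prime p ->
  exists f : {poly {poly int}},
    f`_0`_0 = 0 /\ (exists i j : nat, ~~ (p%:Z %| f`_i`_j)%Z) /\ peval2 mul f a b = 0.
Proof.
move=> mulK sepK a b p cab p_pr; pose cuv := embed_comm mulK cab.
pose t : {fraction {poly 'F_p}} := tofrac 'X.
have t_neq0 : t != 0 by rewrite tofrac_eq0 polyX_eq0.
have ct : GRing.comm t (t^-2) by exact: mulrC.
pose A x := exists2 f, (exists q, tofrac q = zeval2 ct f) & zeval2 cuv f = (0, x).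
have subA : is_subrng mul A.
  exact: subrng_embed_image (subrng_preim (zeval2 ct) (subrng_range (@tofrac _))).
have [f [q fq] fb] : A b.
  apply: finitely_separable_mem sepK subA _ => F mulF phi _ [phiD phiM].
  pose ab := mul a b.
  have [i [j [lt_ij phi_ij]]] := nat_fun_collision (fun n => phi (rpow mul ab n.*2.+1)).
  set m := i.*2.+1 in phi_ij; pose k := (j - i).-1.*2; pose n := (m + k.+2)%N.
  have phi_mn : phi (rpow mul ab m) = phi (rpow mul ab n).
    by rewrite phi_ij /n /m /k; congr (phi (rpow _ _ _)); lia.
  pose s : {poly {poly int}} :=
    'Y + ('X * 'Y) ^+ m * 'X ^+ n * 'Y - ('X * 'Y) ^+ n * 'X ^+ n * 'Y.
  exists (b + mul (mul (rpow mul ab m) (rpow mul a n)) b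
            - mul (mul (rpow mul ab n) (rpow mul a n)) b).
    exists s.
      exists ('X ^+ k); rewrite /s rmorphB rmorphD !rmorphM !rmorphXn rmorphM /=.
      by rewrite zeval2X zeval2Y expr_invX2_telescope // rmorphXn.
    rewrite /s rmorphB rmorphD !rmorphM !rmorphXn rmorphM /= zeval2X zeval2Y.
    rewrite embedM !embedX_gt0 // !(embedM mulK _ (rpow mul a n)) !embedM.
    by congr pair; rewrite addr0 subr0.
  by rewrite (add_zmod_morphism phiD) phiD !phiM phi_mn addrK.
pose r := 'Y - f.
have := zeval2_embed mulK cab r; rewrite rmorphB /= zeval2Y fb subrr => -[r0 rval].
exists r; split=> //; split=> //.
apply: NNPP => all_dvd.
have pT : p \in [pchar {fraction {poly 'F_p}}].
  exact: (rmorph_pchar (@tofrac {poly 'F_p}) (rmorph_pchar polyC (pchar_Fp p_pr))).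
have : zeval2 ct r = 0.
  apply: (zeval2_pchar_dvd _ pT) => i j.
  by apply: NNPP => ndvd; apply: all_dvd; exists i, j; apply/negP.
rewrite rmorphB /= zeval2Y -fq => /eqP; rewrite subr_eq0; exact/negP/tofracX_invX2_neq.
Qed.

Theorem lemma2 (K : zmodType) (mul : K -> K -> K) :
  rng_axioms mul -> finitely_separable mul ->
  (forall a : K, exists g : {poly int},
      g != 0 /\ g`_0 = 0 /\ peval mul g a = 0) /\
  (forall (a b : K) (p : nat), mul a b = mul b a -> prime p ->
     exists f : {poly {poly int}},
       f`_0`_0 = 0 /\
       (exists i j : nat, ~~ (p%:Z %| f`_i`_j)%Z) /\
       peval2 mul f a b = 0).
Proof.
move=> mulK sepK; split.
- exact: finitely_separable_algebraic.
- exact: finitely_separable_pchar_relation.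
Qed.
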